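(* Let $\nu_1,\nu_2\in\mathbb C^\times$ and let $\nu_{ij}\in\mathbb C$ ($i=1,2$, $j=1,2,3$) satisfy $$\nu_{12}-\nu_{13}=\nu_{21}-\nu_{22}.$$ Put $a_i=\sum_{j=1}^3\nu_{ij}G_j\in\mathfrak g$ for $i=1,2$. Then there is a unique algebra automorphism $\theta$ of $\mathrm U_q(\mathfrak{gl}_3)$ such that $$\theta(E_i)=\nu_i E_i\,q^{a_i},\qquad \theta(F_i)=\nu_i^{-1}q^{-a_i}F_i\quad(i=1,2),\qquad \theta(q^X)=q^X\quad(X\in\mathfrak g).$$
   Context: Setting: $\hbar\in\mathbb C$, $q=e^\hbar$, $q^2\neq1$, $\kappa_q=q-q^{-1}$, $[\nu]_q=(q^\nu-q^{-\nu})/\kappa_q$. Let $\mathfrak g=\mathbb CG_1\oplus\mathbb CG_2\oplus\mathbb CG_3$ and define linear forms $\alpha_1,\alpha_2$ on $\mathfrak g$ by $\alpha_1(G_1)=1,\alpha_1(G_2)=-1,\alpha_1(G_3)=0$, $\alpha_2(G_1)=0,\alpha_2(G_2)=1,\alpha_2(G_3)=-1$; put $H_1=G_1-G_2$, $H_2=G_2-G_3$. $\mathrm U_q(\mathfrak{gl}_3)$ is the unital associative $\mathbb C$-algebra generated by $E_1,E_2,F_1,F_2$ and symbols $q^X$, $X\in\mathfrak g$, with relations $q^0=1$, $q^{X_1}q^{X_2}=q^{X_1+X_2}$, $q^XE_iq^{-X}=q^{\alpha_i(X)}E_i$, $q^XF_iq^{-X}=q^{-\alpha_i(X)}F_i$,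 $[E_i,F_j]=\delta_{ij}(q^{H_i}-q^{-H_i})/\kappa_q$, and for $i\ne j$ the $q$-Serre relations $E_i^2E_j-[2]_qE_iE_jE_i+E_jE_i^2=0$, $F_i^2F_j-[2]_qF_iF_jF_i+F_jF_i^2=0$. For $\nu\in\mathbb C$ one writes $q^{X+\nu}=q^\nu q^X$. *)

From HB Require Import structures.
From mathcomp Require Import all_boot all_order all_algebra.
Set Implicit Arguments. Unset Strict Implicit. Unset Printing Implicit Defensive.
Import GRing.Theory.
Local Open Scope ring_scope.

Section Uq.
Variables (K : fieldType) (e : K -> K) (hbar : K).
(* e plays the role of the exponential: q = e hbar, q^nu = e (hbar * nu) *)
Definition qq : K := e hbar.
Definition qpow (nu : K) : K := e (hbar * nu).
Definition kappa : K := qq - qq^-1.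
Definition qint (nu : K) : K := (qpow nu - qpow (- nu)) / kappa.

(* g = K G_1 + K G_2 + K G_3, realised as row vectors; G j = j-th basis vector *)
Definition G (j : 'I_3) : 'rV[K]_3 := delta_mx 0 j.
Definition alpha (i : 'I_2) (X : 'rV[K]_3) : K :=
  X 0 (inord i) - X 0 (inord i.+1).
Definition H (i : 'I_2) : 'rV[K]_3 := G (inord i) - G (inord i.+1).

Definition Uq_rels (A : algType K) (E F : 'I_2 -> A) (Q : 'rV[K]_3 -> A) : Prop :=
  [/\ Q 0 = 1,
      (forall X Y, Q X * Q Y = Q (X + Y)),
      (forall X i, Q X * E i * Q (- X) = qpow (alpha i X) *: E i),
      (forall X i, Q X * F i * Q (- X) = qpow (- alpha i X) *: F i) &
      [/\ (forall i j, E i * F j - F j * E i =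
            (if i == j then kappa^-1 *: (Q (H i) - Q (- H i)) else 0)),
          (forall i j, i != j ->
            E i ^+ 2 * E j - qint 2 *: (E i * E j * E i) + E j * E i ^+ 2 = 0) &
          (forall i j, i != j ->
            F i ^+ 2 * F j - qint 2 *: (F i * F j * F i) + F j * F i ^+ 2 = 0)]].

Definition alg_hom (A B : algType K) (f : A -> B) : Prop :=
  [/\ (forall x y, f (x + y) = f x + f y),
      (forall x y, f (x * y) = f x * f y),
      f 1 = 1 &
      (forall (k : K) x, f (k *: x) = k *: f x)].

Definition alg_aut (A : algType K) (f : A -> A) : Prop :=
  alg_hom f /\ bijective f.

(* (A; E, F, Q) is U_q(gl_3): it satisfies the relations and is universal
   (initial) among K-algebras with elements satisfying the relations. *)
Definition is_Uq (A : algType K) (E F : 'I_2 -> A) (Q : 'rV[K]_3 -> A) : Prop :=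
  Uq_rels E F Q /\
  forall (B : algType K) (E' F' : 'I_2 -> B) (Q' : 'rV[K]_3 -> B),
    Uq_rels E' F' Q' ->
    exists f : A -> B,
      [/\ alg_hom f, (forall i, f (E i) = E' i), (forall i, f (F i) = F' i),
          (forall X, f (Q X) = Q' X) &
          (forall g : A -> B, alg_hom g -> (forall i, g (E i) = E' i) ->
             (forall i, g (F i) = F' i) -> (forall X, g (Q X) = Q' X) ->
             forall x, g x = f x)].
End Uq.

From HB Require Import structures.
From mathcomp Require Import all_boot all_order all_algebra.
From mathcomp Require Import ring.
Set Implicit Arguments. Unset Strict Implicit. Unset Printing Implicit Defensive.
Import GRing.Theory.
Local Open Scope ring_scope.

(* Given scalars nu_i <> 0 and weights a_i in g, the "twisted generators"
     E'_i = nu_i E_i q^{a_i},   F'_i = nu_i^{-1} q^{-a_i} F_i,   q^X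
   again satisfy all defining relations of U_q(gl_3), provided the weights are
   compatible: alpha_i(a_j) = alpha_j(a_i).  The proof writes every product
   of twisted generators in the normal form  c *: (w * q^Y)  (a word in the
   E_i, F_i followed by one Cartan element): the q^X-conjugation relations
   are immediate, and in the commutator and q-Serre relations all terms share
   the same Cartan part and, by compatibility, the same scalar, so they reduce
   to the untwisted relations.  By the universal property of U_q(gl_3) the
   twisted generators define an algebra endomorphism theta_(nu,a); the one for
   (nu^{-1}, -a) is its two-sided inverse, because a composite fixing all
   generators is the identity.  Finally the condition
   nu_12 - nu_13 = nu_21 - nu_22 is exactly compatibility of a_i = sum_j nu_ij G_j,
   and uniqueness is again the universal property. *)

Lemma alphaD (K : fieldType) i (X Y : 'rV[K]_3) : alpha i (X + Y) = alpha i X + alpha i Y.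
Proof. by rewrite /alpha !mxE addrACA opprD. Qed.

Lemma alphaN (K : fieldType) i (X : 'rV[K]_3) : alpha i (- X) = - alpha i X.
Proof. by rewrite /alpha !mxE opprB addrC opprK. Qed.

Definition compatible (K : fieldType) (a : 'I_2 -> 'rV[K]_3) : Prop :=
  forall i j, alpha i (a j) = alpha j (a i).

Lemma compatibleN (K : fieldType) (a : 'I_2 -> 'rV[K]_3) :
  compatible a -> compatible (fun i => - a i).
Proof. by move=> hc i j; rewrite !alphaN hc. Qed.

Section Twist.
Variables (K : fieldType) (e : K -> K) (hbar : K).
Hypotheses (he0 : e 0 = 1) (heD : forall x y, e (x + y) = e x * e y).
Local Notation p := (qpow e hbar).

Lemma qpowD x y : p (x + y) = p x * p y.
Proof. by rewrite /qpow mulrDr heD. Qed.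

Lemma qpow0 : p 0 = 1.
Proof. by rewrite /qpow mulr0 he0. Qed.

Variables (A : algType K) (E F : 'I_2 -> A) (Q : 'rV[K]_3 -> A).
Hypothesis HR : Uq_rels e hbar E F Q.

Lemma Q0 : Q 0 = 1. Proof. by case: HR. Qed.
Lemma QD X Y : Q X * Q Y = Q (X + Y). Proof. by case: HR. Qed.
Lemma QC X Y : Q X * Q Y = Q Y * Q X. Proof. by rewrite !QD addrC. Qed.

Lemma QE X i : Q X * E i = p (alpha i X) *: (E i * Q X).
Proof.
case: HR => _ _ conjE _ _.
by rewrite -[LHS]mulr1 -Q0 -(addNr X) -QD mulrA conjE -scalerAl.
Qed.

Lemma QF X i : Q X * F i = p (- alpha i X) *: (F i * Q X).
Proof.
case: HR => _ _ _ conjF _.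
by rewrite -[LHS]mulr1 -Q0 -(addNr X) -QD mulrA conjF -scalerAl.
Qed.

Lemma mul_normal (beta : 'rV[K]_3 -> K) (c d : K) (w X : A) (Y Z : 'rV[K]_3) :
  Q Y * X = p (beta Y) *: (X * Q Y) ->
  (c *: (w * Q Y)) * (d *: (X * Q Z)) = (c * d * p (beta Y)) *: (w * X * Q (Y + Z)).
Proof.
move=> QX; rewrite -scalerAl -scalerAr scalerA mulrA -[w * Q Y * X]mulrA QX.
by rewrite -scalerAr -scalerAl scalerA !mulrA -(mulrA _ (Q Y)) QD.
Qed.

Lemma normal_relation (c1 c2 c3 k : K) (w1 w2 w3 : A) (Y1 Y2 Y3 : 'rV[K]_3) :
  c2 = c1 -> c3 = c1 -> Y2 = Y1 -> Y3 = Y1 -> w1 - k *: w2 + w3 = 0 ->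
  c1 *: (w1 * Q Y1) - k *: (c2 *: (w2 * Q Y2)) + c3 *: (w3 * Q Y3) = 0.
Proof.
move=> -> -> -> -> rel; rewrite scalerA [k * c1]mulrC -scalerA [k *: (w2 * _)]scalerAl.
by rewrite -scalerBr -scalerDr -mulrBl -mulrDl rel mul0r scaler0.
Qed.

Variables (nu : 'I_2 -> K) (a : 'I_2 -> 'rV[K]_3).

Definition twE (i : 'I_2) : A := nu i *: (E i * Q (a i)).
Definition twF (i : 'I_2) : A := (nu i)^-1 *: (Q (- a i) * F i).

Lemma twF_normal i : twF i = ((nu i)^-1 * p (alpha i (a i))) *: (F i * Q (- a i)).
Proof. by rewrite /twF QF alphaN opprK scalerA. Qed.

Lemma twE_mul (c : K) (w : A) (Y : 'rV[K]_3) k :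
  (c *: (w * Q Y)) * twE k = (c * nu k * p (alpha k Y)) *: (w * E k * Q (Y + a k)).
Proof. exact: mul_normal (QE Y k). Qed.

Lemma twF_mul (c : K) (w : A) (Y : 'rV[K]_3) k :
  (c *: (w * Q Y)) * twF k =
  (c * ((nu k)^-1 * p (alpha k (a k))) * p (- alpha k Y)) *: (w * F k * Q (Y - a k)).
Proof. by rewrite twF_normal (mul_normal (beta := fun Y => - alpha k Y)) //; exact: QF. Qed.

Lemma twE_triple i j k : twE i * twE j * twE k =
  (nu i * nu j * p (alpha j (a i)) * nu k * p (alpha k (a i + a j))) *:
    (E i * E j * E k * Q (a i + a j + a k)).
Proof. by rewrite {1}/twE !twE_mul. Qed.

Lemma twF_triple i j k : twF i * twF j * twF k =
  ((nu i)^-1 * p (alpha i (a i)) * ((nu j)^-1 * p (alpha j (a j))) *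
    p (- alpha j (- a i)) * ((nu k)^-1 * p (alpha k (a k))) *
    p (- alpha k (- a i - a j))) *:
    (F i * F j * F k * Q (- a i - a j - a k)).
Proof. by rewrite {1}twF_normal !twF_mul. Qed.

Hypothesis hc : compatible a.

(* [E'_i, F'_j] is a multiple of [E_i, F_j] q^{a_i - a_j}; the multiple is 1 when i = j. *)
Lemma twist_commutator (nu_neq0 : forall i, nu i != 0) i j :
  twE i * twF j - twF j * twE i =
  (if i == j then (kappa e hbar)^-1 *: (Q (H K i) - Q (- H K i)) else 0).
Proof.
have [_ _ _ _ [commEF _ _]] := HR.
rewrite {1}/twE twF_mul twF_normal twE_mul [- a j + a i]addrC.
have -> : (nu j)^-1 * p (alpha j (a j)) * nu i * p (alpha i (- a j)) =
          nu i * ((nu j)^-1 * p (alpha j (a j))) * p (- alpha j (a i)).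
  by rewrite alphaN hc; ring.
rewrite -scalerBr -mulrBl commEF; case: eqP => [<-|_]; last by rewrite mul0r scaler0.
by rewrite subrr Q0 mulr1 mulrA mulfV // mul1r -qpowD addrN qpow0 scale1r.
Qed.

Lemma twist_serreE i j : i != j ->
  twE i ^+ 2 * twE j - qint e hbar 2 *: (twE i * twE j * twE i) + twE j * twE i ^+ 2 = 0.
Proof.
have [_ _ _ _ [_ serreE _]] := HR.
move=> neq_ij; rewrite !expr2 mulrA !twE_triple.
apply: normal_relation.
- by rewrite !alphaD (hc i j) !qpowD; ring.
- by rewrite !alphaD (hc i j) !qpowD; ring.
- by rewrite addrAC.
- by rewrite [a j + a i]addrC addrAC.
- by rewrite -(serreE i j neq_ij) !expr2 !mulrA.
Qed.

Lemma twist_serreF i j : i != j ->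
  twF i ^+ 2 * twF j - qint e hbar 2 *: (twF i * twF j * twF i) + twF j * twF i ^+ 2 = 0.
Proof.
have [_ _ _ _ [_ _ serreF]] := HR.
move=> neq_ij; rewrite !expr2 mulrA !twF_triple.
apply: normal_relation.
- by rewrite -!alphaN !opprD !opprK !alphaD (hc i j) !qpowD; ring.
- by rewrite -!alphaN !opprD !opprK !alphaD (hc i j) !qpowD; ring.
- by rewrite addrAC.
- by rewrite [- a j - a i]addrC addrAC.
- by rewrite -(serreF i j neq_ij) !expr2 !mulrA.
Qed.

Lemma twist_rels : (forall i, nu i != 0) -> Uq_rels e hbar twE twF Q.
Proof.
move=> nu_neq0; have [hQ0 hQD conjE conjF _] := HR.
split => //.
- move=> X i; rewrite /twE -scalerAr -scalerAl -!mulrA (QC (a i)) !mulrA conjE.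
  by rewrite -!scalerAl !scalerA mulrC.
- move=> X i; rewrite /twF -scalerAr -scalerAl !mulrA (QC X) -!mulrA (mulrA (Q X)) conjF.
  by rewrite -scalerAr !scalerA mulrC.
split; [exact: twist_commutator | exact: twist_serreE | exact: twist_serreF].
Qed.

End Twist.

Lemma alg_hom_id (K : fieldType) (A : algType K) : alg_hom (@id A).
Proof. by []. Qed.

Lemma alg_hom_comp (K : fieldType) (A B C : algType K) (f : B -> C) (g : A -> B) :
  alg_hom f -> alg_hom g -> alg_hom (f \o g).
Proof.
move=> [fD fM f1 fZ] [gD gM g1 gZ]; split=> /=.
- by move=> x y; rewrite gD fD.
- by move=> x y; rewrite gM fM.
- by rewrite g1 f1.
- by move=> k x; rewrite gZ fZ.
Qed.

Section Universal.
Variables (K : fieldType) (e : K -> K) (hbar : K) (A : algType K).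
Variables (E F : 'I_2 -> A) (Q : 'rV[K]_3 -> A).
Hypothesis HU : is_Uq e hbar E F Q.

Lemma uq_hom_ext (B : algType K) (E' F' : 'I_2 -> B) (Q' : 'rV[K]_3 -> B)
    (f g : A -> B) :
  Uq_rels e hbar E' F' Q' -> alg_hom f -> alg_hom g ->
  (forall i, f (E i) = E' i) -> (forall i, f (F i) = F' i) -> (forall X, f (Q X) = Q' X) ->
  (forall i, g (E i) = E' i) -> (forall i, g (F i) = F' i) -> (forall X, g (Q X) = Q' X) ->
  forall x, f x = g x.
Proof.
move=> R' f_hom g_hom fE fF fQ gE gF gQ x.
have [h [_ _ _ _ h_uniq]] := HU.2 B E' F' Q' R'.
by rewrite (h_uniq f) // (h_uniq g).
Qed.

Lemma uq_endo_id (f : A -> A) : alg_hom f ->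
  (forall i, f (E i) = E i) -> (forall i, f (F i) = F i) -> (forall X, f (Q X) = Q X) ->
  forall x, f x = x.
Proof. by move=> f_hom fE fF fQ; apply: uq_hom_ext HU.1 f_hom (alg_hom_id A) _ _ _ _ _ _. Qed.

(* A twist by (c, b) followed by a twist by (d, b') with c d = 1 and
   b + b' = 0 fixes every generator, hence is the identity. *)
Lemma twist_cancel (c d : 'I_2 -> K) (b b' : 'I_2 -> 'rV[K]_3) (f g : A -> A) :
  (forall i, c i * d i = 1) -> (forall i, b i + b' i = 0) ->
  alg_hom f -> (forall i, f (E i) = twE E Q c b i) ->
  (forall i, f (F i) = twF F Q c b i) -> (forall X, f (Q X) = Q X) ->
  alg_hom g -> (forall i, g (E i) = twE E Q d b' i) ->
  (forall i, g (F i) = twF F Q d b' i) -> (forall X, g (Q X) = Q X) ->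
  cancel f g.
Proof.
move=> cd1 bb'0 f_hom fE fF fQ g_hom gE gF gQ x.
have [_ gM _ gZ] := g_hom; have QD_A := QD HU.1.
apply: (uq_endo_id (alg_hom_comp g_hom f_hom)) => /= [i|i|X].
- rewrite fE /twE gZ gM gE gQ /twE -scalerAl scalerA -mulrA QD_A.
  by rewrite cd1 scale1r addrC bb'0 (Q0 HU.1) mulr1.
- rewrite fF /twF gZ gM gF gQ /twF -scalerAr scalerA mulrA QD_A -invfM cd1 invr1.
  by rewrite scale1r -opprD bb'0 oppr0 (Q0 HU.1) mul1r.
- by rewrite fQ gQ.
Qed.

Hypotheses (he0 : e 0 = 1) (heD : forall x y, e (x + y) = e x * e y).

Lemma twist_automorphism (nu : 'I_2 -> K) (a : 'I_2 -> 'rV[K]_3) :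
  (forall i, nu i != 0) -> compatible a ->
  exists theta : A -> A,
    [/\ alg_aut theta, (forall i, theta (E i) = twE E Q nu a i),
        (forall i, theta (F i) = twF F Q nu a i) & (forall X, theta (Q X) = Q X)].
Proof.
move=> nu_neq0 hc; have [HR univ] := HU.
have inu_neq0 i : (nu i)^-1 != 0 by rewrite invr_neq0.
have [th [th_hom thE thF thQ _]] := univ A _ _ Q (twist_rels he0 heD HR hc nu_neq0).
have [th' [th'_hom th'E th'F th'Q _]] :=
  univ A _ _ Q (twist_rels he0 heD HR (compatibleN hc) inu_neq0).
exists th; split => //; split => //; exists th'.
- apply: (twist_cancel _ _ th_hom thE thF thQ th'_hom th'E th'F th'Q) => i.
  + by rewrite mulfV.
  + by rewrite addrN.
- apply: (twist_cancel _ _ th'_hom th'E th'F th'Q th_hom thE thF thQ) => i.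
  + by rewrite mulVf.
  + by rewrite addNr.
Qed.
End Universal.

Lemma alpha_coords (K : fieldType) (c : 'I_3 -> K) (i : 'I_2) :
  alpha i (\sum_(j < 3) c j *: G K j) = c (inord i) - c (inord i.+1).
Proof.
have coord k : (\sum_(j < 3) c j *: G K j) 0 k = c k.
  rewrite summxE (bigD1 k) //= big1 => [|j neq_jk]; rewrite !mxE ?eqxx ?mulr1 ?addr0 //.
  by rewrite eq_sym (negbTE neq_jk) andbF mulr0.
by rewrite /alpha !coord.
Qed.

Lemma sum_coords_compatible (K : fieldType) (nuij : 'I_2 -> 'I_3 -> K) :
  nuij (inord 0) (inord 1) - nuij (inord 0) (inord 2)
    = nuij (inord 1) (inord 0) - nuij (inord 1) (inord 1) ->
  compatible (fun i => \sum_(j < 3) nuij i j *: G K j).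
Proof.
have ord2 (k : 'I_2) : k = inord 0 \/ k = inord 1.
  by case: k => [[|[|//]] lt_k2]; [left|right]; apply: val_inj; rewrite /= inordK.
move=> hcond i j; rewrite !alpha_coords.
by case: (ord2 i) => ->; case: (ord2 j) => ->; rewrite ?inordK.
Qed.

Theorem mainTheorem1 (K : fieldType) (e : K -> K)
  (he0 : e 0 = 1) (heD : forall x y, e (x + y) = e x * e y)
  (hbar : K) (hq : qq e hbar ^+ 2 != 1)
  (A : algType K) (E F : 'I_2 -> A) (Q : 'rV[K]_3 -> A)
  (HU : is_Uq e hbar E F Q)
  (nu : 'I_2 -> K) (hnu : forall i, nu i != 0)
  (nuij : 'I_2 -> 'I_3 -> K)
  (hcond : nuij (inord 0) (inord 1) - nuij (inord 0) (inord 2)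
           = nuij (inord 1) (inord 0) - nuij (inord 1) (inord 1)) :
  let a (i : 'I_2) : 'rV[K]_3 := \sum_(j < 3) nuij i j *: G K j in
  let P (theta : A -> A) : Prop :=
    [/\ alg_aut theta,
        (forall i, theta (E i) = nu i *: (E i * Q (a i))),
        (forall i, theta (F i) = (nu i)^-1 *: (Q (- a i) * F i)) &
        (forall X, theta (Q X) = Q X)] in
  exists theta : A -> A, P theta /\
    forall theta' : A -> A, P theta' -> forall x, theta' x = theta x.
Proof.
move=> a P.
have hc : compatible a := sum_coords_compatible hcond.
have [theta [theta_aut thetaE thetaF thetaQ]] := twist_automorphism HU he0 heD hnu hc.
exists theta; split; first by split.
move=> theta' [[theta'_hom _] theta'E theta'F theta'Q].
exact: (uq_hom_ext HU (twist_rels he0 heD HU.1 hc hnu) theta'_hom theta_aut.1).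
Qed.
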